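(* Assume the refinement setting of the context, with $F(u)=u$, $G(u)=u$, $p\cap\overline{q}\subseteq F(p\cup q)$, $p\cap\overline{q}\subseteq\mathrm{grd}(G)$, $p\cap\overline{q}\subseteq G(q)$, $$r^{-1}[p\cap\overline{q}]\cap\mathrm{grd}(G')\subseteq F'(\mathrm{grd}(G'))\cap H(\mathrm{grd}(G')),$$ and, in the concrete system $S'$, $$\big(r^{-1}[p\cap\overline{q}]\cap\overline{\mathrm{grd}(G')}\big)\leadsto\mathrm{grd}(G').$$ Then $r^{-1}[p]\leadsto r^{-1}[q]$ holds in $S'$.
   Context: Refinement setting: $u$ (abstract states) and $v$ (concrete states) are sets; $F,G$ are conjunctive set transformers on $u$ (conjunctive = preserves intersections of nonempty families of subsets, hence monotone). $\mathrm{grd}(E)=\overline{E(\varnothing)}$. The concrete system $S'$ has a finite family of conjunctive set transformers (events) on $v$, partitioned into three subfamilies whose choices (pointwise intersections) are $F'$, $G'$, $H$, the subfamily for $G'$ being nonempty; $S'(s)=F'(s)\cap G'(s)\cap H(s)$. $r\subseteq v\times u$ is a total relation (every $y\in v$ is related to some $x\in u$). For $a\subseteq v$, $r[a]=\{x\in u\mid\exists y\in a,(y,x)\in r\}$; for $b\subseteq u$, $r^{-1}[b]=\{y\in v\mid\exists x\in b,(y,x)\in r\}$. Complements $\overline{\cdot}$ are taken in $u$ for subsets of $u$ and in $v$ for subsets of $v$. Refinement conditions: for all $s\subseteq v$, $F(\overline{r[\overline{s}]})\subseteq\overline{r[\overline{F'(s)}]}$, $G(\overline{r[\overline{s}]})\subseteq\overline{r[\overline{G'(s)}]}$,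 $\overline{r[\overline{s}]}\subseteq\overline{r[\overline{H(s)}]}$. $p,q\subseteq u$. Ensures in $S'$: for $a,b\subseteq v$ and a helpful event $E$ (choice of a nonempty subfamily of the events of $S'$), $E\cdot a\gg_w b$ means $a\cap\overline{b}\subseteq S'(a\cup b)$ and $a\cap\overline{b}\subseteq\mathrm{grd}(E)\cap E(b)$. Leads-to $\leadsto$ in $S'$ is the smallest relation on $\mathbb{P}(v)$ such that: (BRL) if $E\cdot a\gg_w b$ for some helpful $E$ then $a\leadsto b$; (TRA) $a\leadsto c$ and $c\leadsto b$ imply $a\leadsto b$; (DSJ) if $a_m\leadsto b$ for all $m$ in an index set $M$ then $\bigcup_{m\in M}a_m\leadsto b$. *)

From mathcomp Require Import all_boot.
From mathcomp Require Export classical_sets cardinality.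
Set Implicit Arguments. Unset Strict Implicit. Unset Printing Implicit Defensive.
Local Open Scope classical_set_scope.

Definition conjunctive (T : Type) (E : set T -> set T) : Prop :=
  forall A : set (set T), A !=set0 ->
    E (\bigcap_(a in A) a) = \bigcap_(a in A) E a.

Definition grd (T : Type) (E : set T -> set T) : set T := ~` (E set0).

Definition choice (I T : Type) (ev : I -> set T -> set T) (A : set I)
  : set T -> set T := fun s => \bigcap_(i in A) ev i s.

Definition rimg (v u : Type) (r : v -> u -> Prop) (a : set v) : set u :=
  [set x | exists2 y, a y & r y x].
Definition rpre (v u : Type) (r : v -> u -> Prop) (b : set u) : set v :=
  [set y | exists2 x, b x & r y x].

Definition ensures (T : Type) (S E : set T -> set T) (a b : set T) : Prop :=
  a `&` ~` b `<=` S (a `|` b) /\ a `&` ~` b `<=` grd E `&` E b.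

(* leads-to in the concrete system with events ev : I -> ...,
   S is the system transformer; helpful events are choices of nonempty
   subfamilies of the events. *)
Inductive leadsto (I T : Type) (ev : I -> set T -> set T) (S : set T -> set T)
  : set T -> set T -> Prop :=
| lt_BRL (a b : set T) (A : set I) :
    A !=set0 -> ensures S (choice ev A) a b -> leadsto ev S a b
| lt_TRA (a c b : set T) :
    leadsto ev S a c -> leadsto ev S c b -> leadsto ev S a b
| lt_DSJ (Fa : set (set T)) (b : set T) :
    (forall a, Fa a -> leadsto ev S a b) ->
    leadsto ev S (\bigcup_(a in Fa) a) b.

(* Put A = r^-1[p \ q] and B = r^-1[q].  The refinement conditions carry the
   abstract step from p \ q to q down to A <= F'(A u B), A <= G'(B) and
   A <= H(A u B): A is stable unless B, and G' leads from A to B wherever it is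
   enabled.  Where G' is disabled, the hypothesis leads to grd G', and PSP with
   the stability of A shows that we reach it inside A, or reach B first.
   Since r^-1[p] <= A u B, this gives r^-1[p] ~> r^-1[q]. *)

From mathcomp Require Import all_boot classical_sets cardinality.
From Stdlib Require Import Classical.
Set Implicit Arguments. Unset Strict Implicit. Unset Printing Implicit Defensive.
Local Open Scope classical_set_scope.

Section Conjunctive.
Variables (T : Type) (E : set T -> set T).
Hypothesis E_conj : conjunctive E.

Lemma conjunctiveI X Y : E (X `&` Y) = E X `&` E Y.
Proof.
have XY0 : X |` [set Y] !=set0 by exists X; left.
by have := E_conj XY0; rewrite !bigcap_setU1 !bigcap_set1.
Qed.

Lemma conjunctiveS X Y : X `<=` Y -> E X `<=` E Y.
Proof. by move=> XY; rewrite -(setIidl XY) conjunctiveI => z []. Qed.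

Lemma conjunctive_guardI a b g : E g `&` E (a `|` b) `<=` E ((a `&` g) `|` b).
Proof.
rewrite -conjunctiveI; apply: conjunctiveS.
by move=> z [gz [az|bz]]; [left|right].
Qed.

End Conjunctive.

Section Choice.
Variables (I T : Type) (ev : I -> set T -> set T).

Lemma conjunctive_choice P :
  (forall i, conjunctive (ev i)) -> conjunctive (choice ev P).
Proof.
move=> ev_conj A A0; rewrite /choice.
rewrite (eq_bigcapr (G := fun i => \bigcap_(a in A) ev i a)) => [|i _].
  by apply/seteqP; split=> x h a Aa i Pi; exact: h.
exact: ev_conj.
Qed.

Lemma choiceU P Q s : choice ev (P `|` Q) s = choice ev P s `&` choice ev Q s.
Proof. exact: bigcap_setU. Qed.

Lemma choice_subfamily P Q s : P `<=` Q -> choice ev Q s `<=` choice ev P s.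
Proof. by move=> PQ x h i /PQ; exact: h. Qed.

End Choice.

Section Relation.
Variables (v u : Type) (r : v -> u -> Prop).

(* [~` rimg r (~` s)] is the set of abstract states all of whose concrete
   representatives lie in [s]. *)

Lemma rpreS X Y : X `<=` Y -> rpre r X `<=` rpre r Y.
Proof. by move=> XY y [x /XY Yx ryx]; exists x. Qed.

Lemma rpreU X Y : rpre r (X `|` Y) = rpre r X `|` rpre r Y.
Proof.
apply/seteqP; split=> y.
  by move=> [x [Xx|Yx] ryx]; [left|right]; exists x.
by move=> [[x Xx ryx]|[x Yx ryx]]; exists x => //; [left|right].
Qed.

Lemma rpre_rbox s : rpre r (~` rimg r (~` s)) `<=` s.
Proof. by move=> y [x box_x ryx]; apply: NNPP => sy; apply: box_x; exists y. Qed.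

Lemma sub_rbox_rpre X : X `<=` ~` rimg r (~` rpre r X).
Proof. by move=> x Xx [y nXy ryx]; apply: nXy; exists x. Qed.

Lemma rpre_refined (E : set u -> set u) (E' : set v -> set v) X Y s :
  conjunctive E -> (forall s, E (~` rimg r (~` s)) `<=` ~` rimg r (~` E' s)) ->
  X `<=` E Y -> Y `<=` ~` rimg r (~` s) -> rpre r X `<=` E' s.
Proof.
move=> E_conj refines XY Ys y [x Xx ryx]; apply: rpre_rbox; exists x => //.
by apply: refines; apply: conjunctiveS Ys _ (XY _ Xx).
Qed.

End Relation.

Section LeadsTo.
Variables (I T : Type) (ev : I -> set T -> set T) (S : set T -> set T).
Hypothesis ev_conj : forall i, conjunctive (ev i).
Hypothesis S_def : forall s, S s = choice ev [set: I] s.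
Variable i0 : I.

Local Notation leadsto := (leadsto ev S).

Lemma system_conjunctive : conjunctive S.
Proof.
move=> A A0; rewrite S_def conjunctive_choice //.
by apply: eq_bigcapr => s _; rewrite S_def.
Qed.

Lemma system_sub_choice P s : S s `<=` choice ev P s.
Proof. by rewrite S_def; exact: choice_subfamily. Qed.

Lemma leadsto_sub a b : a `<=` b -> leadsto a b.
Proof.
move=> ab; apply: (@lt_BRL _ _ _ _ a b [set i0]); first by exists i0.
by split=> z [/ab bz []].
Qed.

Lemma leadsto_subl a a' b : a `<=` a' -> leadsto a' b -> leadsto a b.
Proof. by move=> aa'; apply: lt_TRA; exact: leadsto_sub. Qed.

Lemma leadsto_bigcup (J : Type) (P : set J) (f : J -> set T) b :
  (forall j, P j -> leadsto (f j) b) -> leadsto (\bigcup_(j in P) f j) b.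
Proof.
move=> fb; rewrite -(bigcup_image P f id).
by apply: lt_DSJ => _ [j Pj <-]; exact: fb.
Qed.

Lemma leadstoU a c b : leadsto a b -> leadsto c b -> leadsto (a `|` c) b.
Proof.
move=> ab cb; rewrite -bigcup2E.
by apply: leadsto_bigcup => -[|[|n]] //= _; exact: leadsto_sub.
Qed.

Lemma ensures_PSP A a b c d :
  c `&` ~` d `<=` S (c `|` d) -> ensures S (choice ev A) a b ->
  ensures S (choice ev A) (a `&` c) ((b `&` c) `|` d).
Proof.
move=> cd [ab_safe ab_prog].
have split_not :
    a `&` c `&` ~` ((b `&` c) `|` d) `<=` (a `&` ~` b) `&` (c `&` ~` d).
  by move=> z [[az cz] nz]; split; split=> // ?; apply: nz; [left|right].
split=> z /split_not [abz /cd Scd].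
- have : S ((a `|` b) `&` (c `|` d)) z.
    by rewrite conjunctiveI; [split; [exact: ab_safe|]|exact: system_conjunctive].
  apply: conjunctiveS; first exact: system_conjunctive.
  by move=> w [[aw|bw] [cw|dw]]; [left|right; right|right; left|right; right].
- have [grd_z Eb] := ab_prog z abz; split=> //.
  have : choice ev A (b `&` (c `|` d)) z.
    rewrite conjunctiveI; last exact: conjunctive_choice.
    by split=> //; exact: system_sub_choice.
  apply: (conjunctiveS (conjunctive_choice A ev_conj)).
  by move=> w [bw [cw|dw]]; [left|right].
Qed.

Lemma leadsto_PSP a b c d :
  c `&` ~` d `<=` S (c `|` d) -> leadsto a b ->
  leadsto (a `&` c) ((b `&` c) `|` d).
Proof.
move=> cd; elim=> {a b}.
- by move=> a b A A0 ab; apply: (lt_BRL A0); exact: ensures_PSP.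
- move=> a e b _ ae _ eb; apply: lt_TRA ae _.
  by apply: leadstoU => //; apply: leadsto_sub => z dz; right.
- move=> Fa b _ Fab; rewrite setI_bigcupl.
  exact: leadsto_bigcup.
Qed.

Lemma leadsto_split_guard a b g :
  a `&` ~` b `<=` S (a `|` b) ->
  leadsto (a `&` g) b -> leadsto (a `&` ~` g) g -> leadsto a b.
Proof.
move=> safe ag_b ng_g.
have ng_b : leadsto (a `&` ~` g) b.
  apply: leadsto_subl (lt_TRA (leadsto_PSP safe ng_g) _); first by move=> z [].
  by apply: leadstoU; [rewrite setIC|exact: leadsto_sub].
by rewrite -[a]setIT -(setvU g) setIUr; exact: leadstoU.
Qed.

End LeadsTo.

Section HelpfulEvent.
Variables (T : Type) (F' G' H : set T -> set T) (a b : set T).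
Hypotheses (F'_conj : conjunctive F') (G'_conj : conjunctive G')
  (H_conj : conjunctive H).
Hypotheses (a_F' : a `<=` F' (a `|` b)) (a_G' : a `<=` G' b)
  (a_H : a `<=` H (a `|` b)).

Local Notation S := (fun s => F' s `&` G' s `&` H s).

Lemma unless_of_steps : a `&` ~` b `<=` S (a `|` b).
Proof.
move=> y [ay _]; split; [split|]; [exact: a_F'| |exact: a_H].
exact (conjunctiveS G'_conj (@subsetUr _ a b) (a_G' ay)).
Qed.

Lemma ensures_enabled :
  a `&` grd G' `<=` F' (grd G') `&` H (grd G') -> ensures S G' (a `&` grd G') b.
Proof.
move=> a_grd; split=> y [[ay gy] _]; last by split=> //; exact: a_G'.
have [F'g Hg] := a_grd y (conj ay gy); split; [split|].
- exact (conjunctive_guardI F'_conj (conj F'g (a_F' ay))).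
- exact (conjunctiveS G'_conj (@subsetUr _ (a `&` grd G') b) (a_G' ay)).
- exact (conjunctive_guardI H_conj (conj Hg (a_H ay))).
Qed.

End HelpfulEvent.

Theorem lemma7 (u v I : Type)
  (F G : set u -> set u) (ev : I -> set v -> set v)
  (PF PG PH : set I) (r : v -> u -> Prop) (p q : set u) :
  conjunctive F -> conjunctive G ->
  (forall i, conjunctive (ev i)) ->
  finite_set [set: I] ->
  (* PF, PG, PH partition the events; PG is nonempty *)
  PF `|` PG `|` PH = setT ->
  PF `&` PG = set0 -> PF `&` PH = set0 -> PG `&` PH = set0 ->
  PG !=set0 ->
  (* r is total *)
  (forall y : v, exists x : u, r y x) ->
  let F' := choice ev PF in
  let G' := choice ev PG in
  let H := choice ev PH in
  let S' := fun s => F' s `&` G' s `&` H s in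
  (* refinement conditions *)
  (forall s : set v, F (~` rimg r (~` s)) `<=` ~` rimg r (~` F' s)) ->
  (forall s : set v, G (~` rimg r (~` s)) `<=` ~` rimg r (~` G' s)) ->
  (forall s : set v, ~` rimg r (~` s) `<=` ~` rimg r (~` H s)) ->
  (* hypotheses of the lemma *)
  F setT = setT ->
  G setT = setT ->
  p `&` ~` q `<=` F (p `|` q) ->
  p `&` ~` q `<=` grd G ->
  p `&` ~` q `<=` G q ->
  rpre r (p `&` ~` q) `&` grd G' `<=` F' (grd G') `&` H (grd G') ->
  leadsto ev S' (rpre r (p `&` ~` q) `&` ~` grd G') (grd G') ->
  leadsto ev S' (rpre r p) (rpre r q).
Proof.
move=> F_conj G_conj ev_conj _ partition _ _ _ PG0 _ F' G' H S' refF refG refH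
  _ _ pq_F _ pq_G A_grd A_leadsto.
have [i0 _] := PG0.
have S'_def s : S' s = choice ev [set: I] s by rewrite -partition !choiceU.
have pq_box : p `|` q `<=` ~` rimg r (~` (rpre r (p `&` ~` q) `|` rpre r q)).
  by rewrite -rpreU -setDE setUDl setDv setD0; exact: sub_rbox_rpre.
set A := rpre r (p `&` ~` q) in pq_box A_grd A_leadsto *.
set B := rpre r q in pq_box *.
have [F'_conj G'_conj H_conj] :
    [/\ conjunctive F', conjunctive G' & conjunctive H].
  by split; exact: conjunctive_choice.
have A_F' : A `<=` F' (A `|` B) by exact: rpre_refined F_conj refF pq_F pq_box.
have A_G' : A `<=` G' B.
  exact: rpre_refined G_conj refG pq_G (@sub_rbox_rpre _ _ r q).
have A_H : A `<=` H (A `|` B).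
  move=> y [x [px _] ryx]; apply: (rpre_rbox (r := r)); exists x => //.
  by apply/refH/pq_box; left.
apply: (leadsto_subl i0 (a' := A `|` B)).
  rewrite -rpreU; apply: rpreS => x px.
  by have [qx|nqx] := classic (q x); [right|left].
apply: (leadstoU i0 _ (leadsto_sub _ _ i0 (@subset_refl _ B))).
apply: (leadsto_split_guard ev_conj S'_def i0 _ _ A_leadsto).
  exact: (unless_of_steps G'_conj A_F' A_G' A_H).
exact: lt_BRL PG0 (ensures_enabled F'_conj G'_conj H_conj A_F' A_G' A_H A_grd).
Qed.
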